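(* Let $\mathcal X,\mathcal Y$ be Polish spaces, $(\mu,\nu)\in\mathcal P(\mathcal X)\times\mathcal P(\mathcal Y)$ and $C:\mathcal X\times\mathcal P(\mathcal Y)\to\overline{\mathbb{R}}$ measurable. Then the values of \[ \inf_{(X,Y,\mathcal F):\ X\sim\mu,\ Y\sim\nu,\ \mathcal F\supset\sigma(X)}\mathbb E\big[C(X,\mathscr L(Y|\mathcal F))\big] \quad\text{and}\quad \inf_{P\in\Lambda(\mu,\nu)}\int_{\mathcal X\times\mathcal P(\mathcal Y)}C(x,p)\,P(dx,dp) \] coincide, where the first infimum runs over triplets consisting of random variables $X,Y$ and a $\sigma$-algebra $\mathcal F\supset\sigma(X)$ on an arbitrary probability space.
   Context: $\overline{\mathbb{R}}=\mathbb{R}\cup\{\pm\infty\}$; $\mathscr L(Y|\mathcal F)$ denotes the conditional law of $Y$ given $\mathcal F$. The intensity map $\hat I:\mathcal P(\mathcal X\times\mathcal P(\mathcal Y))\to\mathcal P(\mathcal X\times\mathcal Y)$ is defined by $\hat I(P)(f)=\int\int f(x,y)\,p(dy)\,P(dx,dp)$ for bounded continuous $f$, and $\Lambda(\mu,\nu):=\{P\in\mathcal P(\mathcal X\times\mathcal P(\mathcal Y)):\hat I(P)\text{ has marginals }\mu,\nu\}$. *)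

From HB Require Import structures.
From mathcomp Require Import all_boot all_order all_algebra.
From mathcomp Require Import all_classical all_reals all_analysis.
From mathcomp Require Import measurable_realfun.
Set Implicit Arguments. Unset Strict Implicit. Unset Printing Implicit Defensive.
Import Order.TTheory GRing.Theory Num.Theory.
Local Open Scope classical_set_scope.
Local Open Scope ring_scope.

Definition metric_open (T : Type) (R : realType) (dist : T -> T -> R) : set (set T) :=
  [set U | forall x, U x -> exists e : R, 0 < e /\ forall y, dist x y < e -> U y].

Definition polish_borel (R : realType) (d : measure_display) (T : measurableType d) : Prop :=
  exists dist : T -> T -> R,
    [/\ (forall x y, 0 <= dist x y),
        (forall x y, dist x y = 0 <-> x = y),
        (forall x y, dist x y = dist y x) &
        (forall x y z, dist x z <= dist x y + dist y z)] /\
    [/\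
        (forall u : nat -> T,
           (forall e : R, 0 < e -> exists N, forall m n, (N <= m)%N -> (N <= n)%N ->
               dist (u m) (u n) < e) ->
           exists l, forall e : R, 0 < e -> exists N, forall n, (N <= n)%N -> dist (u n) l < e),
        (exists D : nat -> T, forall x (e : R), 0 < e -> exists n, dist x (D n) < e)
      & @measurable d T = <<s metric_open dist >> ].

Local Open Scope ereal_scope.

Definition is_cond_law (R : realType) (dO : measure_display) (O : measurableType dO)
  (P : probability O R) (dY : measure_display) (Y : measurableType dY)
  (F : set (set O)) (Yv : O -> Y) (K : O -> pprobability Y R) : Prop :=
  (forall G : set (pprobability Y R), measurable G -> F (K @^-1` G)) /\
  (forall A, F A -> forall B : set Y, measurable B ->
      P (A `&` Yv @^-1` B) = \int[P]_(w in A) (K w : probability Y R) B).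

Definition value_randomized (R : realType) (dX dY : measure_display)
  (X : measurableType dX) (Y : measurableType dY)
  (mu : probability X R) (nu : probability Y R)
  (C : X * pprobability Y R -> \bar R) : \bar R :=
  ereal_inf [set v | exists (dO : measure_display) (O : measurableType dO)
      (P : probability O R) (Xv : O -> X) (Yv : O -> Y) (F : set (set O))
      (K : O -> pprobability Y R),
    [/\ measurable_fun setT Xv, measurable_fun setT Yv,
        (forall A, measurable A -> P (Xv @^-1` A) = mu A) &
        (forall B, measurable B -> P (Yv @^-1` B) = nu B)] /\
    [/\ sigma_algebra setT F, F `<=` measurable,
        (forall A, measurable A -> F (Xv @^-1` A)),
        is_cond_law P F Yv K
      & v = \int[P]_w C (Xv w, K w)]].

Definition intensity (R : realType) (dX dY : measure_display)
  (X : measurableType dX) (Y : measurableType dY)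
  (P : probability (X * pprobability Y R)%type R) (S : set (X * Y)) : \bar R :=
  \int[P]_z (z.2 : probability Y R) (xsection S z.1).

Definition Lambda (R : realType) (dX dY : measure_display)
  (X : measurableType dX) (Y : measurableType dY)
  (mu : probability X R) (nu : probability Y R)
  (P : probability (X * pprobability Y R)%type R) : Prop :=
  (forall A : set X, measurable A -> intensity P (A `*` setT) = mu A) /\
  (forall B : set Y, measurable B -> intensity P (setT `*` B) = nu B).

Definition value_Lambda (R : realType) (dX dY : measure_display)
  (X : measurableType dX) (Y : measurableType dY)
  (mu : probability X R) (nu : probability Y R)
  (C : X * pprobability Y R -> \bar R) : \bar R :=
  ereal_inf [set \int[P]_z C z | P in Lambda mu nu].

From HB Require Import structures.
From mathcomp Require Import all_boot all_order all_algebra.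
From mathcomp Require Import all_classical all_reals all_analysis.
From mathcomp Require Import measurable_realfun.
Set Implicit Arguments. Unset Strict Implicit. Unset Printing Implicit Defensive.
Import Order.TTheory.
Local Open Scope classical_set_scope.
Local Open Scope ring_scope.
Local Open Scope ereal_scope.

(* A triplet (X, Y, F) together with a version K of L(Y | F) yields the law of
   (X, K), which lies in Lambda(mu, nu) since E[K(B)] = P(Y \in B), and has the
   same cost.  Conversely, P in Lambda(mu, nu) is realized on (X * P(Y)) * Y
   under the measure P(dx, dp) p(dy), with F generated by (x, p): there the
   second coordinate p is itself the conditional law of y given F. *)

Section integral_pushforward.
Context d d' (T : measurableType d) (T' : measurableType d') (R : realType).
Variables (mu : {measure set T -> \bar R}) (f : T -> T').
Hypothesis mf : measurable_fun setT f.

Lemma integral_pushforward_measurable D (g : T' -> \bar R) :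
  measurable D -> measurable_fun D g ->
  \int[pushforward mu f]_(y in D) g y = \int[mu]_(x in f @^-1` D) g (f x).
Proof.
move=> mD mg; rewrite [LHS]integralE [RHS]integralE.
rewrite [X in X - _ = _]ge0_integral_pushforward; last 4 first.
- done.
- done.
- exact: measurable_funepos.
- by move=> y _; exact: funepos_ge0.
rewrite [X in _ - X = _]ge0_integral_pushforward; last 4 first.
- done.
- done.
- exact: measurable_funeneg.
- by move=> y _; exact: funeneg_ge0.
by rewrite -funepos_comp -funeneg_comp.
Qed.

End integral_pushforward.

Lemma integral_distribution_measurable d d' (T : measurableType d)
    (T' : measurableType d') (R : realType) (P : probability T R)
    (f : {mfun T >-> T'}) (g : T' -> \bar R) :
  measurable_fun setT g -> \int[distribution P f]_y g y = \int[P]_x g (f x).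
Proof.
move=> mg; rewrite integral_pushforward_measurable; last 3 first.
- exact: measurable_funPT.
- exact: measurableT.
- exact: mg.
by rewrite preimage_setT.
Qed.

Section measure_kernel_prod.
Context d d' (T : measurableType d) (Y : measurableType d') (R : realType).
Variables (P : probability T R) (k : R.-pker T ~> Y).

Definition measure_kernel_prod (S : set (T * Y)) : \bar R :=
  \int[P]_t k t (xsection S t).

Let measurable_kernel_xsection S : measurable S ->
  measurable_fun setT (fun t => k t (xsection S t)).
Proof.
by move=> mS; apply: measurable_fun_xsection_finite_kernel; rewrite inE.
Qed.

Let measure_kernel_prod0 : measure_kernel_prod set0 = 0.
Proof. by apply: integral0_eq => t _; rewrite xsection0 measure0. Qed.

Let measure_kernel_prod_ge0 S : 0 <= measure_kernel_prod S.
Proof. exact: integral_ge0. Qed.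

Let measure_kernel_prod_sigma_additive :
  semi_sigma_additive measure_kernel_prod.
Proof.
move=> F mF tF mUF.
suff -> : measure_kernel_prod (\bigcup_n F n) =
          \sum_(n <oo) measure_kernel_prod (F n).
  by apply: is_cvg_nneseries => n _ _; exact: measure_kernel_prod_ge0.
rewrite /measure_kernel_prod -integral_nneseries //; last first.
  by move=> n; exact: measurable_kernel_xsection.
apply: eq_integral => t _; rewrite xsection_bigcup measure_semi_bigcup //.
- by move=> n; exact: measurable_xsection.
- exact: trivIset_xsection.
- by rewrite -xsection_bigcup; exact: measurable_xsection.
Qed.

HB.instance Definition _ := isMeasure.Build _ _ _ measure_kernel_prod
  measure_kernel_prod0 measure_kernel_prod_ge0
  measure_kernel_prod_sigma_additive.

Lemma measure_kernel_prodX A B : measurable A -> measurable B ->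
  measure_kernel_prod (A `*` B) = \int[P]_(t in A) k t B.
Proof.
move=> mA mB; rewrite integral_mkcond; apply: eq_integral => t _.
rewrite /patch; case: ifPn => tA; first by rewrite in_xsectionX.
by rewrite notin_xsectionX // measure0.
Qed.

Let measure_kernel_prodT : measure_kernel_prod setT = 1.
Proof.
rewrite -setXTT measure_kernel_prodX //.
under eq_integral do rewrite prob_kernel.
by rewrite integral_cst ?mul1e; [exact: probability_setT|exact: measurableT].
Qed.

HB.instance Definition _ :=
  Measure_isProbability.Build _ _ _ measure_kernel_prod measure_kernel_prodT.

Lemma measure_kernel_prod_fst A : measurable A ->
  measure_kernel_prod (fst @^-1` A) = P A.
Proof.
move=> mA; rewrite -setXT measure_kernel_prodX //.
under eq_integral do rewrite prob_kernel.
by rewrite integral_cst ?mul1e.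
Qed.

Lemma measure_kernel_prod_snd B : measurable B ->
  measure_kernel_prod (snd @^-1` B) = \int[P]_t k t B.
Proof. by move=> mB; rewrite -setTX measure_kernel_prodX. Qed.

Lemma integral_measure_kernel_prod_fst D (g : T -> \bar R) :
  measurable D -> measurable_fun D g ->
  \int[measure_kernel_prod]_(w in fst @^-1` D) g w.1 = \int[P]_(t in D) g t.
Proof.
move=> mD mg; rewrite -integral_pushforward_measurable; last 3 first.
- exact: measurable_fst.
- exact: mD.
- exact: mg.
by apply: eq_measure_integral => A mA _; exact: measure_kernel_prod_fst.
Qed.

End measure_kernel_prod.

Section conditional_law_measure_kernel_prod.
Context d d' (T : measurableType d) (Y : measurableType d') (R : realType).
Variables (P : probability T R) (kappa : T -> pprobability Y R).
Hypothesis mkappa : measurable_fun setT kappa.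

Lemma is_cond_law_measure_kernel_prod :
  is_cond_law (measure_kernel_prod P (kprobability mkappa))
    (preimage_set_system setT fst measurable) snd (kappa \o fst).
Proof.
split=> [G mG|_ [A mA <-] B mB].
  exists (kappa @^-1` G); last by rewrite setTI.
  by rewrite -[X in measurable X]setTI; exact: mkappa.
rewrite setTI (integral_measure_kernel_prod_fst _ _ (g := fun t => kappa t B));
  last 2 first.
- exact: mA.
- exact: measurable_funTS (measurable_kernel (kprobability mkappa) _ mB).
by rewrite -(measure_kernel_prodX _ (kprobability mkappa) mA mB).
Qed.

End conditional_law_measure_kernel_prod.

Section Lambda.
Context (R : realType) (dX dY : measure_display)
  (X : measurableType dX) (Y : measurableType dY)
  (mu : probability X R) (nu : probability Y R).

Lemma intensityX (P : probability (X * pprobability Y R)%type R) A B :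
  measurable A -> measurable B ->
  intensity P (A `*` B) = \int[P]_(z in fst @^-1` A) (z.2 : probability Y R) B.
Proof.
move=> mA mB; rewrite integral_mkcond; apply: eq_integral => z _.
rewrite /patch; case: ifPn => zA; first by rewrite in_xsectionX.
by rewrite notin_xsectionX // measure0.
Qed.

Lemma LambdaP (P : probability (X * pprobability Y R)%type R) :
  Lambda mu nu P <->
  (forall A, measurable A -> P (fst @^-1` A) = mu A) /\
  (forall B, measurable B -> \int[P]_z (z.2 : probability Y R) B = nu B).
Proof.
have fstE A : measurable A -> intensity P (A `*` setT) = P (fst @^-1` A).
  move=> mA; rewrite intensityX //.
  under eq_integral do rewrite probability_setT.
  by rewrite integral_cst ?mul1e // -setXT; exact: measurableX.
have sndE B : measurable B ->
    intensity P (setT `*` B) = \int[P]_z (z.2 : probability Y R) B.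
  by move=> mB; rewrite intensityX // preimage_setT.
split=> -[LA LB]; split=> [A mA|B mB].
- by rewrite -fstE ?LA.
- by rewrite -sndE ?LB.
- by rewrite fstE ?LA.
- by rewrite sndE ?LB.
Qed.

Lemma distribution_in_Lambda dW (W : measurableType dW) (Pm : probability W R)
    (Xv : W -> X) (K : W -> pprobability Y R)
    (mXK : measurable_fun setT (fun w => (Xv w, K w))) :
  (forall A, measurable A -> Pm (Xv @^-1` A) = mu A) ->
  (forall B, measurable B -> \int[Pm]_w (K w : probability Y R) B = nu B) ->
  Lambda mu nu (distribution Pm (mfun_Sub (mem_set mXK))).
Proof.
move=> lawX lawY; apply/LambdaP; split=> [A mA|B mB]; first exact: lawX.
rewrite integral_distribution_measurable ?lawY //.
have msnd := @measurable_snd _ _ X (pprobability Y R).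
exact: measurable_kernel (kprobability msnd) _ mB.
Qed.

End Lambda.

Section value_comparison.
Context (R : realType) (dX dY : measure_display)
  (X : measurableType dX) (Y : measurableType dY)
  (mu : probability X R) (nu : probability Y R)
  (C : X * pprobability Y R -> \bar R).
Hypothesis mC : measurable_fun setT C.

Lemma value_Lambda_le_randomized :
  value_Lambda mu nu C <= value_randomized mu nu C.
Proof.
apply: le_ereal_inf => v [dW [W [Pm [Xv [Yv [F [K]]]]]]].
move=> [[mX _ lawX lawY] [_ FP FX [KF KP] ->]].
have mK : measurable_fun setT K by move=> _ G mG; rewrite setTI; exact/FP/KF.
have mXK : measurable_fun setT (fun w => (Xv w, K w)).
  exact/measurable_fun_pairP.
exists (distribution Pm (mfun_Sub (mem_set mXK)));
  last by rewrite integral_distribution_measurable.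
apply: distribution_in_Lambda => // B mB.
rewrite -lawY // -[Yv @^-1` B]setTI KP //.
by rewrite -(preimage_setT Xv); exact: FX.
Qed.

Lemma value_randomized_le_Lambda :
  value_randomized mu nu C <= value_Lambda mu nu C.
Proof.
apply: le_ereal_inf => _ [P /LambdaP[lawX lawY] <-].
pose k := kprobability (@measurable_snd _ _ X (pprobability Y R)).
exists _, _, (measure_kernel_prod P k), (fun w => w.1.1), snd,
  (preimage_set_system setT fst measurable), (fun w => w.1.2).
split; split.
- exact: measurableT_comp.
- exact: measurable_snd.
- move=> A mA; rewrite -lawX //.
  rewrite -(measure_kernel_prod_fst P k (A := fst @^-1` A)) //.
  by rewrite -setXT; exact: measurableX.
- by move=> B mB; rewrite -lawY //; exact: measure_kernel_prod_snd.
- exact/sigma_algebra_preimage/sigma_algebra_measurable.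
- by move=> _ [A mA <-]; rewrite setTI -setXT; exact: measurableX.
- move=> A mA; exists (fst @^-1` A); last by rewrite setTI.
  by rewrite -setXT; exact: measurableX.
- exact: is_cond_law_measure_kernel_prod.
- rewrite -(integral_measure_kernel_prod_fst P k measurableT mC).
  by rewrite preimage_setT; apply: eq_integral => -[[x p] y].
Qed.

End value_comparison.

Theorem corollary3p3 (R : realType) (dX dY : measure_display)
  (X : measurableType dX) (Y : measurableType dY) :
  polish_borel R X -> polish_borel R Y ->
  forall (mu : probability X R) (nu : probability Y R)
         (C : X * pprobability Y R -> \bar R),
  measurable_fun setT C ->
  value_randomized mu nu C = value_Lambda mu nu C.
Proof.
move=> _ _ mu nu C mC; apply/le_anti/andP; split.
- exact: value_randomized_le_Lambda.
- exact: value_Lambda_le_randomized.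
Qed.
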